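(* Let $\mathbb{F}$ be a field with $\operatorname{char}\mathbb{F}\neq 2$, let $\xi,\eta\in\mathbb{F}\setminus\{0,1\}$ with $\xi\neq\eta$, and let $M$ be an axial decomposition algebra of Majorana type $(\xi,\eta)$. Then $M$ is dihedral if and only if $M$ is generated (as an algebra) by two axes and there exists an automorphism of $M$ which interchanges these two generating axes.
   Context: $M$ is a commutative nonassociative algebra over $\mathbb{F}$. Let $\Phi:\{0,1,2,3\}\to\mathbb{F}$ with $\Phi(0)=0$, $\Phi(1)=1$, $\Phi(2)=\xi$, $\Phi(3)=\eta$. An element $a\in M$ is an axis (with parameters $\Phi$) if it comes with a decomposition $M=\bigoplus_{i=0}^3 M^i(a)$ (part of the data of the axis) such that: (1) $xa=\Phi(i)x$ for all $x\in M^i(a)$; (2) $M^1(a)=\mathbb{F}a$; (3) $M^0(a)M^i(a)\subset M^i(a)$ for all $i$, $M^2(a)M^2(a)\subset M^0(a)\oplus M^1(a)$, $M^2(a)M^3(a)\subset M^3(a)$ and $M^3(a)M^3(a)\subset M^0(a)\oplus M^1(a)\oplus M^2(a)$. $M$ is an axial decomposition algebra of Majorana type $(\xi,\eta)$ if it has such an axis. For an axis $a$, its Miyamoto involution $\tau(a)$ is the automorphism of $M$ acting as the identity on $M^0(a)\oplus M^1(a)\oplus M^2(a)$ and as $-1$ on $M^3(a)$. $M$ is called dihedral if it is equipped with a sequence of axes $(a_i)_{i\in\mathbb{Z}}$ such that (D1) $M$ is generated as an algebra by the $a_i$; (D2) $a_i\mapsto a_{i+1}$ (for all $i$) extends to an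 automorphism of $M$; (D3) for every $j\in\mathbb{Z}$, the Miyamoto involution $\tau(a_j)$ maps $a_i$ to $a_{2j-i}$ for all $i$. *)

From HB Require Import structures.
From mathcomp Require Import all_boot all_order all_algebra.
Set Implicit Arguments. Unset Strict Implicit. Unset Printing Implicit Defensive.
Import GRing.Theory.
Local Open Scope ring_scope.

Section Axial.
Variables (F : fieldType) (V : lmodType F) (mul : V -> V -> V).

Definition is_cna : Prop :=
  (forall c x y z, mul (c *: x + y) z = c *: mul x z + mul y z) /\
  (forall x y, mul x y = mul y x).

Definition is_subspace (U : V -> Prop) : Prop :=
  U 0 /\ (forall x y, U x -> U y -> U (x + y)) /\ (forall c x, U x -> U (c *: x)).

Record decomp := Decomp { M0 : V -> Prop; M1 : V -> Prop; M2 : V -> Prop; M3 : V -> Prop }.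

Definition is_direct_decomp (D : decomp) : Prop :=
  [/\ [/\ is_subspace (M0 D), is_subspace (M1 D), is_subspace (M2 D) & is_subspace (M3 D)],
      (forall x, exists x0 x1 x2 x3,
         [/\ M0 D x0, M1 D x1, M2 D x2, M3 D x3 & x = x0 + x1 + x2 + x3]) &
      (forall x0 x1 x2 x3, M0 D x0 -> M1 D x1 -> M2 D x2 -> M3 D x3 ->
         x0 + x1 + x2 + x3 = 0 -> [/\ x0 = 0, x1 = 0, x2 = 0 & x3 = 0])].

Definition prod_in (A B C : V -> Prop) : Prop :=
  forall x y, A x -> B y -> C (mul x y).

Definition sum2 (A B : V -> Prop) : V -> Prop :=
  fun x => exists y z, A y /\ B z /\ x = y + z.

(* a is an axis with parameters Phi = (0 |-> 0, 1 |-> 1, 2 |-> xi, 3 |-> eta)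
   and decomposition D. *)
Definition is_axis (xi eta : F) (a : V) (D : decomp) : Prop :=
  [/\ is_direct_decomp D,
      [/\ (forall x, M0 D x -> mul x a = 0),
          (forall x, M1 D x -> mul x a = x),
          (forall x, M2 D x -> mul x a = xi *: x) &
          (forall x, M3 D x -> mul x a = eta *: x)],
      (forall x, M1 D x <-> exists c : F, x = c *: a) &
      [/\ [/\ prod_in (M0 D) (M0 D) (M0 D), prod_in (M0 D) (M1 D) (M1 D),
          prod_in (M0 D) (M2 D) (M2 D) & prod_in (M0 D) (M3 D) (M3 D)],
          prod_in (M2 D) (M2 D) (sum2 (M0 D) (M1 D)),
          prod_in (M2 D) (M3 D) (M3 D) &
          prod_in (M3 D) (M3 D) (sum2 (sum2 (M0 D) (M1 D)) (M2 D))]].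

(* f is the Miyamoto involution of the decomposition D: the linear map which is
   the identity on M^0 + M^1 + M^2 and -1 on M^3 (it is unique, since
   D is a direct sum decomposition). *)
Definition is_miyamoto (D : decomp) (f : V -> V) : Prop :=
  [/\ (forall c x y, f (c *: x + y) = c *: f x + f y),
      (forall x, M0 D x -> f x = x), (forall x, M1 D x -> f x = x),
      (forall x, M2 D x -> f x = x) & (forall x, M3 D x -> f x = - x)].

Definition is_aut (f : V -> V) : Prop :=
  [/\ (forall c x y, f (c *: x + y) = c *: f x + f y), bijective f &
      (forall x y, f (mul x y) = mul (f x) (f y))].

Definition generates (S : V -> Prop) : Prop :=
  forall U : V -> Prop, is_subspace U -> prod_in U U U ->
    (forall x, S x -> U x) -> forall x, U x.

Definition is_axial_decomp_majorana (xi eta : F) : Prop :=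
  exists a D, is_axis xi eta a D.

Definition is_dihedral (xi eta : F) : Prop :=
  exists (a : int -> V) (D : int -> decomp),
    [/\ (forall i, is_axis xi eta (a i) (D i)),
        generates (fun x => exists i, x = a i),
        (exists phi, is_aut phi /\ forall i, phi (a i) = a (i + 1)) &
        (forall j tau, is_miyamoto (D j) tau ->
                      forall i, tau (a i) = a (2 * j - i))].

End Axial.

From mathcomp Require Import all_boot all_algebra.
From mathcomp Require Import ring zify.
Set Implicit Arguments. Unset Strict Implicit. Unset Printing Implicit Defensive.
Import GRing.Theory.
Local Open Scope ring_scope.

(* Let p(t) = t (t - 1) (t - xi). For an axis a with eta not in {0, 1, xi}, the map
   tau(a) = 1 - 2 p(ad a) / p(eta) is +1 on the eigenspaces for 0, 1, xi and -1 on the one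
   for eta, so it is the unique Miyamoto involution of a; the fusion rules make it an
   automorphism, being a polynomial in ad a it preserves every subalgebra containing a, and
   h tau(a) = tau(h a) h for every automorphism h.
   If (a_i) is dihedral with shift rho, then tau(a_j) a_i = a_(2j-i), so a_0 and a_1 already
   generate, and rho tau(a_0) swaps them. Conversely, if a and b generate and phi swaps them,
   then phi^2 = 1 (it fixes the generators), and rho = phi tau(a) satisfies
   tau(a) rho^n = rho^-n tau(a). The axes a_i = rho^i a, with the decompositions transported
   by rho^i, form a dihedral sequence: tau(a_j) a_i = rho^j tau(a) rho^(i-j) a = a_(2j-i). *)

Section LinearMaps.
Variables (R : pzRingType) (U W : lmodType R).

Section OneMap.
Variable f : U -> W.
Hypothesis f_lin : linear f.

Lemma lin_add : {morph f : x y / x + y}.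
Proof. by move=> x y; rewrite -[x]scale1r f_lin !scale1r. Qed.
Lemma lin_scale c : {morph f : x / c *: x}.
Proof. exact: scalable_linear. Qed.
Lemma lin_sub : {morph f : x y / x - y}.
Proof. exact: zmod_morphism_linear. Qed.
Lemma lin0 : f 0 = 0.
Proof. by rewrite -(subrr 0) lin_sub subrr. Qed.
Lemma lin_opp : {morph f : x / - x}.
Proof. by move=> x; rewrite -sub0r lin_sub lin0 sub0r. Qed.
End OneMap.

Lemma linear_sub_fun (f g : U -> W) : linear f -> linear g -> linear (fun x => f x - g x).
Proof.
move=> fL gL c x y; rewrite fL gL scalerBr opprD !addrA; congr (_ - _).
by rewrite addrAC.
Qed.

Lemma linear_comp (f g : U -> U) : linear f -> linear g -> linear (f \o g).
Proof. by move=> fL gL c x y /=; rewrite gL fL. Qed.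

End LinearMaps.

Lemma linear_scale_fun (R : comPzRingType) (U W : lmodType R) (c : R) (f : U -> W) :
  linear f -> linear (fun x => c *: f x).
Proof. by move=> fL d x y; rewrite fL scalerDr !scalerA mulrC. Qed.

Section IntegerIterates.
Variables (T : Type) (s g : T -> T).
Hypotheses (sK : cancel s g) (gK : cancel g s).

Definition iterz (i : int) : T -> T :=
  match i with Posz n => iter n s | Negz n => iter n.+1 g end.

Lemma iterzS i x : iterz (i + 1) x = s (iterz i x).
Proof.
case: i => [n|[|n]].
- by rewrite (_ : Posz n + 1 = Posz n.+1) //; lia.
- by rewrite (_ : Negz 0 + 1 = 0) /= ?gK //; rewrite NegzE; lia.
- by rewrite (_ : Negz n.+1 + 1 = Negz n) /= ?gK //; rewrite !NegzE; lia.
Qed.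

Lemma iterzB1 i x : iterz (i - 1) x = g (iterz i x).
Proof. by rewrite -[in RHS](subrK 1 i) iterzS sK. Qed.

Lemma iterzD i j x : iterz (i + j) x = iterz i (iterz j x).
Proof.
elim/int_rect: i j x => [|n IH|n IH] j x; first by rewrite add0r.
  by rewrite (_ : n.+1%:Z + j = (n%:Z + j) + 1) ?iterzS ?IH //; lia.
rewrite (_ : - n.+1%:Z + j = (- n%:Z + j) - 1); last by lia.
by rewrite iterzB1 IH (_ : - n.+1%:Z = - n%:Z - 1) ?iterzB1 //; lia.
Qed.

Lemma iterzK i : cancel (iterz i) (iterz (- i)).
Proof. by move=> x; rewrite -iterzD addNr. Qed.

Lemma iterzVK i : cancel (iterz (- i)) (iterz i).
Proof. by move=> x; rewrite -iterzD subrr. Qed.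

Lemma iterz_ind (P : (T -> T) -> Prop) : P id ->
  (forall f, P f -> P (s \o f)) -> (forall f, P f -> P (g \o f)) -> forall i, P (iterz i).
Proof.
move=> P0 Ps Pg [] n; first by elim: n => //= n; apply: Ps.
by elim: n => [|n IH]; apply: Pg.
Qed.

Lemma iterz_conj (t : T -> T) : (forall x, t (s x) = g (t x)) -> (forall x, t (g x) = s (t x)) ->
  forall i x, t (iterz i x) = iterz (- i) (t x).
Proof.
move=> ts tg; elim/int_rect=> [|n IH|n IH] x; first by rewrite oppr0.
  rewrite (_ : n.+1%:Z = n%:Z + 1) ?iterzS ?ts ?IH; last by lia.
  by rewrite opprD iterzB1.
rewrite (_ : - n.+1%:Z = - n%:Z - 1) ?iterzB1 ?tg ?IH; last by lia.
by rewrite opprB addrC iterzS.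
Qed.

End IntegerIterates.

Section Algebra.
Variables (F : fieldType) (V : lmodType F) (mul : V -> V -> V).
Hypothesis cna : is_cna mul.

Local Notation multiplicative f := {morph f : x y / mul x y}.

Lemma mulC x y : mul x y = mul y x.
Proof. by case: cna. Qed.
Lemma linear_mull z : linear (mul^~ z).
Proof. by move=> c x y; case: cna => ->. Qed.
Lemma mulDl x y z : mul (x + y) z = mul x z + mul y z.
Proof. exact: (lin_add (linear_mull z) x y). Qed.
Lemma mulDr x y z : mul z (x + y) = mul z x + mul z y.
Proof. by rewrite !(mulC z) mulDl. Qed.
Lemma mulZl c x z : mul (c *: x) z = c *: mul x z.
Proof. exact: (lin_scale (linear_mull z) c x). Qed.
Lemma mulNl x z : mul (- x) z = - mul x z.
Proof. exact: (lin_opp (linear_mull z) x). Qed.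
Lemma mulNr x z : mul z (- x) = - mul z x.
Proof. by rewrite !(mulC z) mulNl. Qed.

Lemma subspace_sub (U : V -> Prop) : is_subspace U -> forall x y, U x -> U y -> U (x - y).
Proof. by case=> _ [UD UZ] x y Ux Uy; apply: UD => //; rewrite -scaleN1r; apply: UZ. Qed.

Lemma is_aut_comp f g : is_aut mul f -> is_aut mul g -> is_aut mul (f \o g).
Proof.
case=> [fL fB fM] [gL gB gM]; split=> [c x y||x y] /=.
- by rewrite gL fL.
- exact: bij_comp.
- by rewrite gM fM.
Qed.

Lemma generates_eq (S : V -> Prop) (f g : V -> V) : generates mul S ->
  linear f -> linear g -> multiplicative f -> multiplicative g ->
  (forall x, S x -> f x = g x) -> f =1 g.
Proof.
move=> genS fL gL fM gM eqS x; apply: (genS (fun x => f x = g x)) => //.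
- split; first by rewrite (lin0 fL) (lin0 gL).
  by split=> [u v eu ev|c u eu]; rewrite ?(lin_add fL) ?(lin_add gL) ?(lin_scale fL)
    ?(lin_scale gL) eu ?ev.
- by move=> u v eu ev; rewrite fM gM eu ev.
Qed.

Lemma decomp_ind (D : decomp V) (P : V -> Prop) : is_direct_decomp D ->
  (forall x y, P x -> P y -> P (x + y)) ->
  (forall x, [\/ M0 D x, M1 D x, M2 D x | M3 D x] -> P x) -> forall x, P x.
Proof.
case=> _ dec _ PD Phom x; have [x0 [x1 [x2 [x3 [h0 h1 h2 h3 ->]]]]] := dec x.
by apply/PD/Phom/Or44/h3/PD/Phom/Or43/h2/PD/Phom/Or42/h1/Phom/Or41.
Qed.

Lemma lin_fix_sum2 (f : V -> V) (A B : V -> Prop) : linear f ->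
  (forall x, A x -> f x = x) -> (forall x, B x -> f x = x) ->
  forall z, sum2 A B z -> f z = z.
Proof. by move=> fL fA fB z [x [y [Ax [By ->]]]]; rewrite (lin_add fL) fA ?fB. Qed.

Variables xi eta : F.

Definition ad (a x : V) := mul x a.
Definition ad_shift (a : V) (l : F) (x : V) := ad a x - l *: x.
Definition eigen_poly (l : F) := l * (l - 1) * (l - xi).
Definition ad_poly (a x : V) := ad a (ad_shift a 1 (ad_shift a xi x)).
Definition miyamoto (a x : V) := x - (2%:R / eigen_poly eta) *: ad_poly a x.

Lemma linear_ad a : linear (ad a).
Proof. exact: linear_mull. Qed.

Lemma linear_ad_shift a l : linear (ad_shift a l).
Proof. exact: (linear_sub_fun (linear_ad a) (linear_scale_fun l (f := id) _)). Qed.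

Lemma linear_miyamoto a : linear (miyamoto a).
Proof.
apply: (linear_sub_fun (f := id)) => //; apply: linear_scale_fun.
exact: linear_comp (linear_ad a) (linear_comp (linear_ad_shift a 1) (linear_ad_shift a xi)).
Qed.

Lemma ad_shift_eigen a l m x : ad a x = l *: x -> ad_shift a m x = (l - m) *: x.
Proof. by rewrite /ad_shift scalerBl => ->. Qed.

Lemma ad_eigenZ a l c x : ad a x = l *: x -> ad a (c *: x) = l *: (c *: x).
Proof. by rewrite /ad mulZl => ->; rewrite !scalerA mulrC. Qed.

Lemma ad_poly_eigen a l x : ad a x = l *: x -> ad_poly a x = eigen_poly l *: x.
Proof.
move=> axl; rewrite /ad_poly (ad_shift_eigen xi axl).
rewrite (ad_shift_eigen 1 (ad_eigenZ _ axl)) (ad_eigenZ _ (ad_eigenZ _ axl)).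
by rewrite !scalerA /eigen_poly; congr (_ *: _); ring.
Qed.

Lemma miyamoto_eigen a l x : ad a x = l *: x ->
  miyamoto a x = (1 - 2%:R / eigen_poly eta * eigen_poly l) *: x.
Proof. by move/ad_poly_eigen; rewrite /miyamoto => ->; rewrite scalerA scalerBl scale1r. Qed.

Lemma ad_shift_ad a l x : ad_shift a l (ad a x) = ad a (ad_shift a l x).
Proof. by rewrite /ad_shift (lin_sub (linear_ad a)) (lin_scale (linear_ad a)). Qed.

Lemma ad_poly_ad a x : ad_poly a (ad a x) = ad a (ad_poly a x).
Proof. by rewrite /ad_poly ad_shift_ad ad_shift_ad. Qed.

Lemma miyamoto_ad a x : miyamoto a (ad a x) = ad a (miyamoto a x).
Proof.
by rewrite /miyamoto ad_poly_ad [RHS](lin_sub (linear_ad a)) (lin_scale (linear_ad a)).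
Qed.

Lemma miyamoto_morph (h : V -> V) a x : linear h -> multiplicative h ->
  h (miyamoto a x) = miyamoto (h a) (h x).
Proof.
move=> hL hM; rewrite /miyamoto /ad_poly /ad_shift /ad.
by rewrite !(lin_sub hL, lin_scale hL, hM).
Qed.

Lemma miyamoto_subalgebra (U : V -> Prop) a x : is_subspace U -> prod_in mul U U U ->
  U a -> U x -> U (miyamoto a x).
Proof.
move=> Usub Umul Ua Ux.
have UZ c y : U y -> U (c *: y) by case: Usub => _ [_]; apply.
have Uad y : U y -> U (ad a y) by move=> Uy; apply: Umul.
have Ushift l y : U y -> U (ad_shift a l y).
  by move=> Uy; apply: (subspace_sub Usub (Uad _ Uy) (UZ _ _ Uy)).
exact/(subspace_sub Usub Ux)/UZ/Uad/Ushift/Ushift.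
Qed.

Lemma miyamoto_map_unique (D : decomp V) (f g : V -> V) : is_direct_decomp D ->
  is_miyamoto D f -> is_miyamoto D g -> f =1 g.
Proof.
move=> dD [fL f0 f1 f2 f3] [gL g0 g1 g2 g3].
apply: (decomp_ind (P := fun x => f x = g x) dD) => [x y fgx fgy|x].
  by rewrite (lin_add fL) (lin_add gL) fgx fgy.
by case=> hx; [rewrite f0 ?g0 | rewrite f1 ?g1 | rewrite f2 ?g2 | rewrite f3 ?g3].
Qed.

Hypotheses (eta_neq0 : eta != 0) (eta_neq1 : eta != 1) (xi_neq_eta : xi != eta).

Lemma eigen_poly_eta_neq0 : eigen_poly eta != 0.
Proof. by rewrite !mulf_neq0 ?subr_eq0 // eq_sym. Qed.

Section Axis.
Variables (a : V) (D : decomp V).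
Hypothesis Ha : is_axis mul xi eta a D.

Let direct_D : is_direct_decomp D.
Proof. by case: Ha. Qed.

Lemma miyamoto_fixed l x : ad a x = l *: x -> eigen_poly l = 0 -> miyamoto a x = x.
Proof. by move/miyamoto_eigen=> -> ->; rewrite mulr0 subr0 scale1r. Qed.

Lemma miyamoto_M0 x : M0 D x -> miyamoto a x = x.
Proof.
case: Ha => _ [e0 _ _ _] _ _ /e0 ax0; apply: (miyamoto_fixed (l := 0)).
  by rewrite scale0r.
by rewrite /eigen_poly !mul0r.
Qed.

Lemma miyamoto_M1 x : M1 D x -> miyamoto a x = x.
Proof.
case: Ha => _ [_ e1 _ _] _ _ /e1 ax1; apply: (miyamoto_fixed (l := 1)).
  by rewrite scale1r.
by rewrite /eigen_poly subrr mulr0 mul0r.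
Qed.

Lemma miyamoto_M2 x : M2 D x -> miyamoto a x = x.
Proof.
case: Ha => _ [_ _ e2 _] _ _ /e2 ax2; apply: (miyamoto_fixed ax2).
by rewrite /eigen_poly subrr mulr0.
Qed.

Lemma miyamoto_M3 x : M3 D x -> miyamoto a x = - x.
Proof.
case: Ha => _ [_ _ _ e3] _ _ /e3/miyamoto_eigen ->.
by rewrite divfK ?eigen_poly_eta_neq0 // -scaleN1r; congr (_ *: _); ring.
Qed.

Lemma miyamoto_axis : miyamoto a a = a.
Proof. by apply: miyamoto_M1; case: Ha => _ _ M1a _; apply/M1a; exists 1; rewrite scale1r. Qed.

Lemma miyamoto_is_miyamoto : is_miyamoto D (miyamoto a).
Proof.
split; [exact: linear_miyamoto | exact: miyamoto_M0 | exact: miyamoto_M1 |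
  exact: miyamoto_M2 | exact: miyamoto_M3].
Qed.

Lemma miyamotoK : cancel (miyamoto a) (miyamoto a).
Proof.
have tL := linear_miyamoto a.
apply: (decomp_ind (P := fun x => miyamoto a (miyamoto a x) = x) direct_D).
  by move=> x y ex ey; rewrite [miyamoto a (x + y)](lin_add tL) (lin_add tL) ex ey.
by move=> x [] hx; [rewrite !(miyamoto_M0 hx) | rewrite !(miyamoto_M1 hx) |
  rewrite !(miyamoto_M2 hx) | rewrite (miyamoto_M3 hx) (lin_opp tL) (miyamoto_M3 hx) opprK].
Qed.

Lemma miyamoto_mul_homogeneous u v :
  [\/ M0 D u, M1 D u, M2 D u | M3 D u] -> [\/ M0 D v, M1 D v, M2 D v | M3 D v] ->
  miyamoto a (mul u v) = mul (miyamoto a u) (miyamoto a v).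
Proof.
have [_ _ M1a [[f00 _ f02 f03] f22 f23 f33]] := Ha.
pose P u v := miyamoto a (mul u v) = mul (miyamoto a u) (miyamoto a v).
have Psym x y : P x y -> P y x by rewrite /P mulC => ->; rewrite mulC.
have P1 x y : M1 D x -> P x y.
  move=> /[dup] /miyamoto_M1 tx /M1a [c ex]; rewrite /P tx ex !mulZl !(mulC a).
  by rewrite (lin_scale (linear_miyamoto a)) -/(ad a y) miyamoto_ad.
have P00 x y : M0 D x -> M0 D y -> P x y.
  by move=> hx hy; rewrite /P (miyamoto_M0 hx) (miyamoto_M0 hy) miyamoto_M0 //; apply: f00.
have P02 x y : M0 D x -> M2 D y -> P x y.
  by move=> hx hy; rewrite /P (miyamoto_M0 hx) (miyamoto_M2 hy) miyamoto_M2 //; apply: f02.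
have P03 x y : M0 D x -> M3 D y -> P x y.
  move=> hx hy; rewrite /P (miyamoto_M0 hx) (miyamoto_M3 hy) miyamoto_M3 ?mulNr //.
  exact: f03.
have P22 x y : M2 D x -> M2 D y -> P x y.
  move=> hx hy; rewrite /P (miyamoto_M2 hx) (miyamoto_M2 hy).
  exact: (lin_fix_sum2 (linear_miyamoto a) miyamoto_M0 miyamoto_M1 (f22 _ _ hx hy)).
have P23 x y : M2 D x -> M3 D y -> P x y.
  move=> hx hy; rewrite /P (miyamoto_M2 hx) (miyamoto_M3 hy) miyamoto_M3 ?mulNr //.
  exact: f23.
have P33 x y : M3 D x -> M3 D y -> P x y.
  move=> hx hy; rewrite /P (miyamoto_M3 hx) (miyamoto_M3 hy) mulNl mulNr opprK.
  apply: (lin_fix_sum2 (linear_miyamoto a) _ miyamoto_M2 (f33 _ _ hx hy)).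
  exact: (lin_fix_sum2 (linear_miyamoto a) miyamoto_M0 miyamoto_M1).
case=> hu [] hv; change (P u v);
  first [exact: P1 | exact: Psym (P1 _ _ _) | by auto | by apply: Psym; auto].
Qed.

Lemma miyamoto_mul : multiplicative (miyamoto a).
Proof.
have tL := linear_miyamoto a.
move=> x y; move: x; apply: (decomp_ind direct_D) => [x x' ex ex'|x hx].
  by rewrite mulDl (lin_add tL) ex ex' (lin_add tL) -mulDl.
move: y; apply: (decomp_ind direct_D) => [y y' ey ey'|y hy].
  by rewrite mulDr (lin_add tL) ey ey' (lin_add tL) -mulDr.
exact: miyamoto_mul_homogeneous.
Qed.

Lemma miyamoto_is_aut : is_aut mul (miyamoto a).
Proof.
split; [exact: linear_miyamoto | | exact: miyamoto_mul].
by exists (miyamoto a); exact: miyamotoK.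
Qed.

End Axis.

Definition preim_decomp (k : V -> V) (D : decomp V) : decomp V :=
  Decomp (fun x => M0 D (k x)) (fun x => M1 D (k x)) (fun x => M2 D (k x))
    (fun x => M3 D (k x)).

Section Transport.
Variables h k : V -> V.
Hypotheses (hL : linear h) (hM : multiplicative h) (hK : cancel h k) (kK : cancel k h).

Lemma inverse_linear : linear k.
Proof. by move=> c x y; apply: (can_inj hK); rewrite hL !kK. Qed.

Lemma inverse_morph : multiplicative k.
Proof. by move=> x y; apply: (can_inj hK); rewrite hM !kK. Qed.

Lemma subspace_preim (U : V -> Prop) : is_subspace U -> is_subspace (fun x => U (k x)).
Proof.
have kL := inverse_linear.
case=> U0 [UD UZ]; split; first by rewrite (lin0 kL).
by split=> [x y Ux Uy|c x Ux]; rewrite ?(lin_add kL) ?(lin_scale kL); [apply: UD | apply: UZ].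
Qed.

Lemma prod_in_preim (A B C : V -> Prop) : prod_in mul A B C ->
  prod_in mul (fun x => A (k x)) (fun x => B (k x)) (fun x => C (k x)).
Proof. by move=> ABC x y Ax By; rewrite inverse_morph; apply: ABC. Qed.

Lemma sum2_preim (A B A' B' : V -> Prop) x :
  (forall y, A (k y) -> A' y) -> (forall y, B (k y) -> B' y) ->
  sum2 A B (k x) -> sum2 A' B' x.
Proof.
move=> AA' BB' [y [z [Ay [Bz e]]]]; exists (h y), (h z).
rewrite -(lin_add hL) -e kK; split; last split=> //.
  by apply: AA'; rewrite hK.
by apply: BB'; rewrite hK.
Qed.

Lemma direct_decomp_preim D : is_direct_decomp D -> is_direct_decomp (preim_decomp k D).
Proof.
have kL := inverse_linear.
case=> [[S0 S1 S2 S3] dec uniq]; split; first by split; apply: subspace_preim.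
  move=> x; have [x0 [x1 [x2 [x3 [h0 h1 h2 h3 ex]]]]] := dec (k x).
  exists (h x0), (h x1), (h x2), (h x3); split; rewrite /= ?hK //.
  by rewrite -[x]kK ex !(lin_add hL).
move=> x0 x1 x2 x3 /= h0 h1 h2 h3 e.
have ek : k x0 + k x1 + k x2 + k x3 = 0 by rewrite -!(lin_add kL) e (lin0 kL).
have [z0 z1 z2 z3] := uniq _ _ _ _ h0 h1 h2 h3 ek.
by split; apply: (can_inj kK); rewrite (lin0 kL).
Qed.

Lemma axis_preim a D : is_axis mul xi eta a D -> is_axis mul xi eta (h a) (preim_decomp k D).
Proof.
case=> dD [e0 e1 e2 e3] M1a [[f00 f01 f02 f03] f22 f23 f33].
have mul_ha x : mul x (h a) = h (mul (k x) a) by rewrite hM kK.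
split; first exact: direct_decomp_preim.
- split=> x /= hx; rewrite mul_ha.
  + by rewrite e0 // (lin0 hL).
  + by rewrite e1 // kK.
  + by rewrite e2 // (lin_scale hL) kK.
  + by rewrite e3 // (lin_scale hL) kK.
- move=> x /=; split; first by case/M1a=> c e; exists c; rewrite -[x]kK e (lin_scale hL).
  by case=> c ->; apply/M1a; exists c; rewrite (lin_scale inverse_linear) hK.
split; first by split; apply: prod_in_preim.
- move=> x y hx hy; apply: (sum2_preim (A := M0 D) (B := M1 D)) => //.
  by rewrite inverse_morph; apply: f22.
- exact: prod_in_preim.
- move=> x y hx hy; apply: (sum2_preim (A := sum2 (M0 D) (M1 D)) (B := M2 D)) => //.
    by move=> z; apply: sum2_preim.
  by rewrite inverse_morph; apply: f33.
Qed.

End Transport.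

Lemma linear_morph_iterz (s g : V -> V) : linear s -> linear g ->
  multiplicative s -> multiplicative g ->
  forall i, linear (iterz s g i) /\ multiplicative (iterz s g i).
Proof.
move=> sL gL sM gM.
apply: (iterz_ind (P := fun f => linear f /\ multiplicative f)) => [|f [fL fM]|f [fL fM]].
- by split=> [c x y|x y].
- by split=> [|x y /=]; [exact: linear_comp | rewrite fM sM].
- by split=> [|x y /=]; [exact: linear_comp | rewrite fM gM].
Qed.

Lemma subalgebra_reflections (ai : int -> V) (U : V -> Prop) :
  is_subspace U -> prod_in mul U U U ->
  (forall i j, miyamoto (ai j) (ai i) = ai (2 * j - i)) ->
  U (ai 0) -> U (ai 1) -> forall i, U (ai i).
Proof.
move=> Usub Umul refl U0 U1.
have Unat (n : nat) : U (ai n) /\ U (ai n.+1).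
  elim: n => [|n [Un Un1]] //; split=> //.
  rewrite (_ : n.+2%:Z = 2 * n.+1%:Z - n%:Z); last by lia.
  by rewrite -refl; apply: miyamoto_subalgebra.
case=> n; first exact: (Unat n).1.
rewrite (_ : Negz n = 2 * 0 - n.+1%:Z); last by rewrite NegzE; lia.
by rewrite -refl; apply: miyamoto_subalgebra => //; exact: (Unat n).2.
Qed.

Lemma dihedral_swap_axes : is_dihedral mul xi eta ->
  exists (a b : V) (Da Db : decomp V),
    [/\ is_axis mul xi eta a Da, is_axis mul xi eta b Db,
        generates mul (fun x => x = a \/ x = b) &
        exists phi, is_aut mul phi /\ phi a = b /\ phi b = a].
Proof.
case=> ai [Di [axes gen [phi [phi_aut phi_shift]] refl_Di]].
have refl i j : miyamoto (ai j) (ai i) = ai (2 * j - i).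
  exact: refl_Di (miyamoto_is_miyamoto (axes j)) i.
exists (ai 0), (ai 1), (Di 0), (Di 1); split=> //.
  move=> U Usub Umul Uab; apply: gen => // _ [i ->].
  by apply: (subalgebra_reflections Usub Umul refl); apply: Uab; [left | right].
exists (phi \o miyamoto (ai 0)); split.
  exact: is_aut_comp phi_aut (miyamoto_is_aut (axes 0)).
by rewrite /= !refl !phi_shift.
Qed.

Section SwapToDihedral.
Variables (a b : V) (Da : decomp V) (phi : V -> V).
Hypotheses (Ha : is_axis mul xi eta a Da) (gen_ab : generates mul (fun x => x = a \/ x = b)).
Hypotheses (phi_aut : is_aut mul phi) (phi_a : phi a = b) (phi_b : phi b = a).

Lemma swap_involutive : cancel phi phi.
Proof.
have [phiL _ phiM] := phi_aut.
have phi2M : multiplicative (phi \o phi) by move=> u v /=; rewrite !phiM.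
apply: (generates_eq (g := id) gen_ab (linear_comp phiL phiL) _ phi2M) => //.
by move=> u [->|->] /=; rewrite ?phi_a ?phi_b.
Qed.

Let rho := phi \o miyamoto a.
Let rho' := miyamoto a \o phi.

Let rhoK : cancel rho rho'.
Proof. by move=> x; rewrite /rho /rho' /= swap_involutive (miyamotoK Ha). Qed.

Let rho'K : cancel rho' rho.
Proof. by move=> x; rewrite /rho /rho' /= (miyamotoK Ha) swap_involutive. Qed.

Let iterz_lin_morph i : linear (iterz rho rho' i) /\ multiplicative (iterz rho rho' i).
Proof.
have [rL _ rM] := is_aut_comp phi_aut (miyamoto_is_aut Ha).
have [r'L _ r'M] := is_aut_comp (miyamoto_is_aut Ha) phi_aut.
exact: linear_morph_iterz.
Qed.

Let ai i := iterz rho rho' i a.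

Lemma miyamoto_iterz_reflection i j : miyamoto (ai j) (ai i) = ai (2 * j - i).
Proof.
have [jL jM] := iterz_lin_morph j.
have tau_rho x : miyamoto a (rho x) = rho' (miyamoto a x) by [].
have tau_rho' x : miyamoto a (rho' x) = rho (miyamoto a x).
  by rewrite /rho /rho' /= !(miyamotoK Ha).
have -> : ai i = iterz rho rho' j (iterz rho rho' (i - j) a).
  by rewrite -(iterzD rhoK rho'K) addrC subrK.
rewrite -(miyamoto_morph _ _ jL jM) (iterz_conj rhoK rho'K tau_rho tau_rho').
rewrite (miyamoto_axis Ha) -(iterzD rhoK rho'K) /ai.
by congr (iterz _ _ _ _); lia.
Qed.

Lemma swap_dihedral : is_dihedral mul xi eta.
Proof.
have axes i : is_axis mul xi eta (ai i) (preim_decomp (iterz rho rho' (- i)) Da).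
  have [iL iM] := iterz_lin_morph i.
  exact: (axis_preim iL iM (iterzK rhoK rho'K i) (iterzVK rhoK rho'K i) Ha).
exists ai, (fun i => preim_decomp (iterz rho rho' (- i)) Da); split => //.
- move=> U Usub Umul Uai; apply: gen_ab => // _ [->|->]; apply: Uai; first by exists 0.
  by exists 1; rewrite /ai /rho /= (miyamoto_axis Ha) phi_a.
- exists rho; split; first exact: is_aut_comp phi_aut (miyamoto_is_aut Ha).
  by move=> i; rewrite /ai (iterzS rho'K).
- move=> j f f_miy i; have [dDj _ _ _] := axes j.
  rewrite (miyamoto_map_unique dDj f_miy (miyamoto_is_miyamoto (axes j))).
  exact: miyamoto_iterz_reflection.
Qed.

End SwapToDihedral.
End Algebra.

Theorem proposition2 (F : fieldType) (V : lmodType F) (mul : V -> V -> V)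
    (xi eta : F) :
  (2%:R : F) != 0 ->
  xi != 0 -> xi != 1 -> eta != 0 -> eta != 1 -> xi != eta ->
  is_cna mul ->
  is_axial_decomp_majorana mul xi eta ->
  is_dihedral mul xi eta <->
  exists (a b : V) (Da Db : decomp V),
    [/\ is_axis mul xi eta a Da, is_axis mul xi eta b Db,
        generates mul (fun x => x = a \/ x = b) &
        exists phi, is_aut mul phi /\ phi a = b /\ phi b = a].
Proof.
move=> _ _ _ eta_neq0 eta_neq1 xi_neq_eta cna _; split.
  exact: dihedral_swap_axes.
case=> a [b [Da [_ [Ha _ gen_ab [phi [phi_aut [phi_a phi_b]]]]]]].
exact: (swap_dihedral cna eta_neq0 eta_neq1 xi_neq_eta Ha gen_ab phi_aut phi_a phi_b).
Qed.
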